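(* Let $P$ be a distribution on the finite alphabet $\mathcal X$ and let $C_1,C_2,\dots,C_N$ be i.i.d. according to $P$. The probability that $C^N=(C_1,\dots,C_N)$ does not satisfy the prefix condition (with respect to $P$) tends to zero as $N\to\infty$.
   Context: A sequence $c^N\in\mathcal X^N$ satisfies the prefix condition with respect to $P$ if for every prefix length $i$ with $N/\ln N< i\le N$, the empirical distribution $\hat P_{c^i}$ of $c^i=(c_1,\dots,c_i)$ satisfies $\|P-\hat P_{c^i}\|_1\le 1/\ln N$. *)

From HB Require Import structures.
From mathcomp Require Import all_boot all_order all_algebra.
From mathcomp Require Import all_classical all_reals all_analysis.
Set Implicit Arguments. Unset Strict Implicit. Unset Printing Implicit Defensive.
Import Order.TTheory GRing.Theory Num.Theory.
Local Open Scope ring_scope.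

Definition is_dist (R : realType) (X : finType) (P : {ffun X -> R}) : Prop :=
  (forall x, 0 <= P x) /\ \sum_(x : X) P x = 1.

Definition emp_dist (R : realType) (X : finType) (N : nat) (c : N.-tuple X)
  (i : nat) (x : X) : R :=
  (count (pred1 x) (take i c))%:R / i%:R.

Definition l1_dist (R : realType) (X : finType) (P : {ffun X -> R}) (Q : X -> R) : R :=
  \sum_(x : X) `|P x - Q x|.

Definition prefix_cond (R : realType) (X : finType) (P : {ffun X -> R})
  (N : nat) (c : N.-tuple X) : bool :=
  [forall i : 'I_N.+1,
    (N%:R / ln (N%:R : R) < (i : nat)%:R) ==>
    (l1_dist P (@emp_dist R X N c i) <= (ln (N%:R : R))^-1)].

Definition iid_prob (R : realType) (X : finType) (P : {ffun X -> R})
  (N : nat) (A : pred (N.-tuple X)) : R :=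
  \sum_(c : N.-tuple X | A c) \prod_(i < N) P (tnth c i).

(* Fix a letter x and a prefix length i.  The centred count
   S = \sum_(k < i) (1[C_k = x] - P x) has E S^4 <= 3 i^2: expanding S^4, the
   expectation of a product of four centred independent factors vanishes unless
   the four indices pair up.  If the prefix condition fails at some i > N / ln N,
   then |S| > i / (|X| ln N) for some x, so by Markov's inequality for S^4 and a
   union bound over i <= N and x, the failure probability is at most
   (N + 1) |X| 3 (|X| ln N)^4 (ln N / N)^2 = O(ln^6 N / N), which is O(1 / ln N)
   because ln^7 N <= 7! N. *)

From HB Require Import structures.
From mathcomp Require Import all_boot all_order all_algebra.
From mathcomp Require Import all_classical all_reals all_analysis.
From mathcomp Require Import lra ring zify.

Import Order.TTheory GRing.Theory Num.Theory numFieldNormedType.Exports.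
Local Open Scope classical_set_scope.
Local Open Scope ring_scope.
(* The law P^N is written on [{ffun 'I_N -> X}] rather than on tuples, so that
   expectations of coordinatewise products factor ([iid_mean_prod]). *)
Section IidMean.
Context {R : realType} {X : finType} (P : {ffun X -> R}) {N : nat}.

Definition iid_weight (f : {ffun 'I_N -> X}) : R := \prod_k P (f k).

Definition iid_mean (g : {ffun 'I_N -> X} -> R) : R := \sum_f iid_weight f * g f.

Lemma eq_iid_mean g h : g =1 h -> iid_mean g = iid_mean h.
Proof. by move=> gh; apply: eq_bigr => f _; rewrite gh. Qed.

Lemma iid_meanZ c g : iid_mean (fun f => c * g f) = c * iid_mean g.
Proof. by rewrite /iid_mean big_distrr; apply: eq_bigr => f _; rewrite mulrCA. Qed.

Lemma iid_mean_sum (I : finType) (p : pred I) (G : I -> {ffun 'I_N -> X} -> R) :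
  iid_mean (fun f => \sum_(i | p i) G i f) = \sum_(i | p i) iid_mean (G i).
Proof. by rewrite /iid_mean; under eq_bigr do rewrite big_distrr; exact: exchange_big. Qed.

Lemma iid_mean_prod (h : 'I_N -> X -> R) :
  iid_mean (fun f => \prod_k h k (f k)) = \prod_k \sum_y P y * h k y.
Proof.
by rewrite bigA_distr_bigA; apply: eq_bigr => f _; rewrite /iid_weight -big_split.
Qed.

Lemma iid_prob_ffun (A : pred (N.-tuple X)) :
  iid_prob P A = \sum_(f : {ffun 'I_N -> X} | A [tuple f k | k < N]) iid_weight f.
Proof.
rewrite /iid_prob (reindex (fun f : {ffun 'I_N -> X} => [tuple f k | k < N])) /=.
  by apply: eq_bigr => f _; apply: eq_bigr => k _; rewrite tnth_mktuple.
exists (fun c : N.-tuple X => [ffun k => tnth c k]) => [f _|c _].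
  by apply/ffunP => k; rewrite ffunE tnth_mktuple.
by apply: eq_from_tnth => k; rewrite tnth_mktuple ffunE.
Qed.

Hypothesis P_ge0 : forall x, 0 <= P x.

Lemma iid_weight_ge0 f : 0 <= iid_weight f.
Proof. exact: prodr_ge0. Qed.

Lemma iid_prob_ge0 (A : pred (N.-tuple X)) : 0 <= iid_prob P A.
Proof. by rewrite iid_prob_ffun; apply: sumr_ge0 => f _; apply: iid_weight_ge0. Qed.

Lemma iid_prob_le_mean (A : pred (N.-tuple X)) (G : {ffun 'I_N -> X} -> R) :
  (forall f, 0 <= G f) ->
  (forall f : {ffun 'I_N -> X}, A [tuple f k | k < N] -> 1 <= G f) ->
  iid_prob P A <= iid_mean G.
Proof.
move=> G_ge0 G_ge1; rewrite iid_prob_ffun /iid_mean.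
rewrite [leRHS](bigID (fun f : {ffun 'I_N -> X} => A [tuple f k | k < N])) /=.
rewrite -[leLHS]addr0 lerD //; last by apply: sumr_ge0 => f _; rewrite mulr_ge0 ?iid_weight_ge0.
by apply: ler_sum => f Af; rewrite ler_peMr ?iid_weight_ge0 ?G_ge1.
Qed.

End IidMean.

Section FourfoldSums.
Context {R : comRingType} {N : nat}.
Implicit Types (u e : 'I_N -> R) (F G : 'I_N -> 'I_N -> 'I_N -> 'I_N -> R).

Definition sum4 F : R := \sum_a \sum_b \sum_c \sum_d F a b c d.

Lemma expr4_sum u : (\sum_k u k) ^+ 4 = sum4 (fun a b c d => u a * u b * u c * u d).
Proof.
rewrite !exprS expr0 mulr1 mulr_suml; apply: eq_bigr => a _.
rewrite mulr_suml mulr_sumr; apply: eq_bigr => b _.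
rewrite mulr_suml !mulr_sumr; apply: eq_bigr => c _.
by rewrite !mulr_sumr; apply: eq_bigr => d _; rewrite !mulrA.
Qed.

Lemma sum4D F G : sum4 (fun a b c d => F a b c d + G a b c d) = sum4 F + sum4 G.
Proof.
rewrite /sum4 -big_split; apply: eq_bigr => a _; rewrite -big_split.
apply: eq_bigr => b _; rewrite -big_split; apply: eq_bigr => c _.
by rewrite -big_split.
Qed.

Definition pairings (a b c d : 'I_N) : R :=
  ((a == b) && (c == d))%:R + ((a == c) && (b == d))%:R + ((a == d) && (b == c))%:R.

Lemma sum4_pairing_ab_cd e :
  sum4 (fun a b c d => e a * e b * e c * e d * ((a == b) && (c == d))%:R)
  = (\sum_k e k ^+ 2) ^+ 2.
Proof.
rewrite /sum4 expr2 big_distrl; apply: eq_bigr => a _ /=.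
rewrite (big_only1 a) //= => [|b ba _]; last first.
  by apply: big1 => c _; apply: big1 => d _; rewrite eq_sym (negbTE ba) mulr0.
rewrite mulr_sumr; apply: eq_bigr => c _.
rewrite (big_only1 c) //= => [|d dc _]; last by rewrite eq_sym (negbTE dc) andbF mulr0.
by rewrite !eqxx mulr1; ring.
Qed.

Lemma sum4_pairing_ac_bd e :
  sum4 (fun a b c d => e a * e b * e c * e d * ((a == c) && (b == d))%:R)
  = (\sum_k e k ^+ 2) ^+ 2.
Proof.
rewrite /sum4 expr2 big_distrl; apply: eq_bigr => a _ /=.
rewrite mulr_sumr; apply: eq_bigr => b _.
rewrite (big_only1 a) //= => [|c ca _]; last first.
  by apply: big1 => d _; rewrite eq_sym (negbTE ca) mulr0.
rewrite (big_only1 b) //= => [|d db _]; last by rewrite eq_sym (negbTE db) andbF mulr0.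
by rewrite !eqxx mulr1; ring.
Qed.

Lemma sum4_pairing_ad_bc e :
  sum4 (fun a b c d => e a * e b * e c * e d * ((a == d) && (b == c))%:R)
  = (\sum_k e k ^+ 2) ^+ 2.
Proof.
rewrite /sum4 expr2 big_distrl; apply: eq_bigr => a _ /=.
rewrite mulr_sumr; apply: eq_bigr => b _.
rewrite (big_only1 b) //= => [|c cb _]; last first.
  by apply: big1 => d _; rewrite (eq_sym b) (negbTE cb) andbF mulr0.
rewrite (big_only1 a) //= => [|d da _]; last by rewrite eq_sym (negbTE da) mulr0.
by rewrite !eqxx mulr1; ring.
Qed.

Lemma sum4_pairings e :
  sum4 (fun a b c d => e a * e b * e c * e d * pairings a b c d)
  = 3 * (\sum_k e k ^+ 2) ^+ 2.
Proof.
transitivity ((\sum_k e k ^+ 2) ^+ 2 *+ 3); last by rewrite mulr_natl.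
rewrite !mulrS mulr0n addr0 -{1}(sum4_pairing_ab_cd e) -{1}(sum4_pairing_ac_bd e).
rewrite -(sum4_pairing_ad_bc e) -!sum4D /sum4.
by do 4!apply: eq_bigr => ? _; rewrite /pairings !mulrDr addrA.
Qed.

End FourfoldSums.

Definition mult4 {T : eqType} (a b c d k : T) : nat :=
  ((a == k) + (b == k) + (c == k) + (d == k))%N.

Lemma mult4_neq1_pairing {T : eqType} (a b c d : T) :
  (forall k, mult4 a b c d k != 1%N) ->
  [|| (a == b) && (c == d), (a == c) && (b == d) | (a == d) && (b == c)].
Proof.
move=> no1; move: (no1 a) (no1 b) (no1 c) (no1 d); rewrite /mult4; clear no1.
(* Two passes: a substitution can create a comparison between variables that
   were already separated. *)
do 2![try (case: (eqVneq a b) => [?|]; subst); try (case: (eqVneq a c) => [?|]; subst);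
  try (case: (eqVneq a d) => [?|]; subst); try (case: (eqVneq b c) => [?|]; subst);
  try (case: (eqVneq b d) => [?|]; subst); try (case: (eqVneq c d) => [?|]; subst)];
  by rewrite ?eqxx.
Qed.

Section FourthMoment.
Context {R : realType} {X : finType} (P : {ffun X -> R}) {N : nat}.
Hypothesis P_dist : is_dist P.
Variable Y : X -> R.
Hypothesis Y_centred : \sum_y P y * Y y = 0.
Hypothesis Y_le1 : forall y, `|Y y| <= 1.

Let moment m := \sum_y P y * Y y ^+ m.

Lemma moment_le1 m : `|moment m| <= 1.
Proof.
have [P_ge0 <-] := P_dist; apply: (le_trans (ler_norm_sum _ _ _)).
apply: ler_sum => y _; rewrite normrM normrX ger0_norm //.
by rewrite ler_piMr // exprn_ile1.
Qed.

Lemma iid_mean_prod4 (a b c d : 'I_N) :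
  iid_mean P (fun f => Y (f a) * Y (f b) * Y (f c) * Y (f d))
  = \prod_k moment (mult4 a b c d k).
Proof.
have pow_delta (Z : 'I_N -> R) j : \prod_k Z k ^+ (j == k) = Z j.
  rewrite (bigD1 j) //= eqxx expr1 big1 ?mulr1 // => k.
  by rewrite eq_sym => /negbTE ->.
rewrite -(iid_mean_prod P (fun k y => Y y ^+ mult4 a b c d k)).
by apply: eq_iid_mean => f; under eq_bigr do rewrite !exprD; rewrite !big_split /= !pow_delta.
Qed.

Lemma iid_mean_prod4_le (a b c d : 'I_N) :
  iid_mean P (fun f => Y (f a) * Y (f b) * Y (f c) * Y (f d)) <= pairings a b c d.
Proof.
rewrite iid_mean_prod4; have [/forallP no1|] := boolP [forall k, mult4 a b c d k != 1%N].
  apply: le_trans (ler_norm _) _; apply: (@le_trans _ _ 1).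
    rewrite normr_prod; apply: prodr_ile1 => k _; rewrite normr_ge0; exact: moment_le1.
  move/mult4_neq1_pairing: no1; rewrite /pairings.
  by do 3!case: (_ && _); rewrite //= ?mulr1n ?mulr0n; lra.
rewrite negb_forall => /existsP[k /negPn/eqP k1].
have moment1 : moment 1 = 0 by rewrite -Y_centred; apply: eq_bigr => y _; rewrite expr1.
by rewrite (bigD1 k) //= k1 moment1 mul0r /pairings !addr_ge0.
Qed.

Lemma fourth_moment_le (e : 'I_N -> R) : (forall k, 0 <= e k <= 1) ->
  iid_mean P (fun f => (\sum_k e k * Y (f k)) ^+ 4) <= 3 * (\sum_k e k) ^+ 2.
Proof.
move=> e01; have e_ge0 k : 0 <= e k by case/andP: (e01 k).
rewrite (eq_iid_mean _ _ _ (fun f => expr4_sum _)).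
apply: (@le_trans _ _ (sum4 (fun a b c d => e a * e b * e c * e d * pairings a b c d))).
  rewrite /sum4 iid_mean_sum; apply: ler_sum => a _; rewrite iid_mean_sum.
  apply: ler_sum => b _; rewrite iid_mean_sum; apply: ler_sum => c _; rewrite iid_mean_sum.
  apply: ler_sum => d _; rewrite (@eq_iid_mean _ _ P _ _
    (fun f => e a * e b * e c * e d * (Y (f a) * Y (f b) * Y (f c) * Y (f d)))); last first.
    by move=> f; ring.
  by rewrite iid_meanZ ler_wpM2l ?mulr_ge0 ?iid_mean_prod4_le.
rewrite sum4_pairings ler_pM2l // !expr2.
have sqr_le k : e k ^+ 2 <= e k by rewrite expr2 ler_piMr //; case/andP: (e01 k).
have sum_sqr_ge0 : 0 <= \sum_k e k ^+ 2 by apply: sumr_ge0 => k _; exact: sqr_ge0.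
have sum_sqr_le : \sum_k e k ^+ 2 <= \sum_k e k by apply: ler_sum => k _; exact: sqr_le.
exact: ler_pM.
Qed.

End FourthMoment.

Lemma sum_ord_lt (R : pzSemiRingType) {N i : nat} : (i <= N)%N ->
  \sum_(k < N) ((k : nat) < i)%:R = i%:R :> R.
Proof.
move=> iN; transitivity (\sum_(k < i) (1 : R)); last by rewrite sumr_const card_ord.
rewrite (big_ord_widen N (fun _ => 1 : R)) // [RHS]big_mkcond.
by apply: eq_bigr => k _; case: (k < i)%N.
Qed.

Lemma count_iota0 (R : pzSemiRingType) (p : pred nat) i :
  (count p (iota 0 i))%:R = \sum_(j < i) (p j)%:R :> R.
Proof.
elim: i => [|i IH]; first by rewrite big_ord0.
by rewrite big_ord_recr -IH -[in LHS]addn1 iotaD count_cat natrD /= addn0.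
Qed.

Lemma count_take_sum (R : pzSemiRingType) (X : finType) N (c : N.-tuple X) x i :
  (i <= N)%N ->
  (count (pred1 x) (take i c))%:R = \sum_(k < N) ((k : nat) < i)%:R * (tnth c k == x)%:R :> R.
Proof.
move=> iN; rewrite -(map_nth_iota0 x) ?size_tuple // count_map count_iota0.
rewrite (big_ord_widen N (fun j => (nth x c j == x)%:R : R)) // big_mkcond /=.
by apply: eq_bigr => k _; rewrite (tnth_nth x); case: (k < i)%N; rewrite ?mul1r ?mul0r.
Qed.

Section PrefixDeviation.
Context {R : realType} {X : finType} (P : {ffun X -> R}).

Definition centred_indicator (x y : X) : R := (y == x)%:R - P x.

Definition centred_count {N : nat} (x : X) (i : nat) (f : {ffun 'I_N -> X}) : R :=
  \sum_(k < N) ((k : nat) < i)%:R * centred_indicator x (f k).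

Lemma l1_dist_le_card (Q : X -> R) t :
  (forall x, `|P x - Q x| <= t) -> l1_dist P Q <= #|X|%:R * t.
Proof. by move=> small; rewrite mulr_natl -sumr_const; apply: ler_sum. Qed.

Lemma emp_dist_centred_count {N} (f : {ffun 'I_N -> X}) x i : (0 < i <= N)%N ->
  P x - emp_dist R [tuple f k | k < N] i x = - centred_count x i f / i%:R.
Proof.
case/andP=> i_gt0 iN; rewrite /emp_dist count_take_sum // /centred_count.
under eq_bigr do rewrite tnth_mktuple.
under [in RHS]eq_bigr do rewrite mulrBr.
rewrite sumrB -mulr_suml sum_ord_lt //; field.
by rewrite pnatr_eq0 -lt0n.
Qed.

Hypothesis P_dist : is_dist P.

Lemma is_dist_card_gt0 : (0 < #|X|)%N.
Proof.
case: P_dist => _ P_sum1; rewrite lt0n; apply/negP => /eqP X0.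
move: P_sum1; rewrite big_pred0 => [/eqP|x]; first by rewrite eq_sym oner_eq0.
exact: card0_eq X0 x.
Qed.

Lemma centred_indicator_mean x : \sum_y P y * centred_indicator x y = 0.
Proof.
case: P_dist => _ P_sum1; rewrite /centred_indicator; under eq_bigr do rewrite mulrBr.
rewrite sumrB -big_distrl /= P_sum1 mul1r (bigD1 x) //= eqxx mulr1.
by rewrite big1 ?addr0 ?subrr // => y /negbTE ->; rewrite mulr0.
Qed.

Lemma centred_indicator_le1 x y : `|centred_indicator x y| <= 1.
Proof.
case: P_dist => P_ge0 P_sum1; have Px_le1 : P x <= 1.
  by rewrite -P_sum1 (bigD1 x) //= lerDl sumr_ge0.
rewrite /centred_indicator; case: (y == x); rewrite ?mulr1n ?mulr0n.
  by rewrite ger0_norm ?subr_ge0 // lerBlDr lerDl.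
by rewrite sub0r normrN ger0_norm.
Qed.

Lemma centred_count_moment4 {N} x i : (i <= N)%N ->
  iid_mean P (fun f : {ffun 'I_N -> X} => centred_count x i f ^+ 4) <= 3 * i%:R ^+ 2.
Proof.
move=> iN; rewrite -(sum_ord_lt R iN) /centred_count; apply: fourth_moment_le.
- by [].
- exact: centred_indicator_mean.
- exact: centred_indicator_le1.
- by move=> k; case: (k < i)%N; rewrite ?lexx ?ler01.
Qed.

Lemma not_prefix_cond_dev {N} (c : N.-tuple X) : (1 < N)%N -> ~~ prefix_cond P c ->
  exists i : 'I_N.+1, exists x, N%:R / ln (N%:R : R) < (i : nat)%:R /\
    1 < #|X|%:R * ln (N%:R : R) * `|P x - emp_dist R c i x|.
Proof.
move=> N_gt1 /forallPn[i]; rewrite negb_imply -ltNge => /andP[i_large l1_large].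
exists i; set K := #|X|%:R * ln (N%:R : R).
have K_gt0 : 0 < K by rewrite mulr_gt0 ?ltr0n ?is_dist_card_gt0 ?ln_gt0 ?ltr1n.
have [x dev_large] : exists x, K^-1 < `|P x - emp_dist R c i x|.
  apply/existsP; apply: contraLR l1_large => /existsPn dev_small; rewrite -leNgt.
  apply: le_trans (l1_dist_le_card _ K^-1 _) _ => [x|]; first by rewrite leNgt dev_small.
  by rewrite invfM mulrA mulfV ?mul1r // pnatr_eq0 -lt0n is_dist_card_gt0.
by exists x; split => //; rewrite -ltr_pdivrMl // mulr1.
Qed.

Lemma prob_not_prefix_cond_le_sum {N} : (1 < N)%N ->
  iid_prob P (fun c : N.-tuple X => ~~ prefix_cond P c) <=
  \sum_(i : 'I_N.+1 | N%:R / ln (N%:R : R) < (i : nat)%:R) \sum_(x : X)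
    3 * (#|X|%:R * ln (N%:R : R)) ^+ 4 / (i : nat)%:R ^+ 2.
Proof.
move=> N_gt1; set L := ln (N%:R : R); set K := #|X|%:R * L.
have [P_ge0 _] := P_dist.
have K_ge0 : 0 <= K by rewrite mulr_ge0 ?ln_ge0 // ler1n ltnW.
have large_gt0 i : N%:R / L < i%:R -> (0 < i)%N.
  by rewrite -(ltr0n R); apply: lt_trans; rewrite divr_gt0 ?ltr0n 1?ltnW // ln_gt0 // ltr1n.
pose G (f : {ffun 'I_N -> X}) := \sum_(i : 'I_N.+1 | N%:R / L < (i : nat)%:R)
  \sum_x (K / (i : nat)%:R * centred_count x i f) ^+ 4.
have G_ge0 f : 0 <= G f by apply: sumr_ge0 => i _; apply: sumr_ge0 => x _; exact: exprn_even_ge0.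
apply: le_trans (iid_prob_le_mean P P_ge0 _ G G_ge0 _) _.
  move=> f /(not_prefix_cond_dev _ N_gt1)[i [x [i_large dev_large]]].
  have term_ge1 : 1 <= (K / (i : nat)%:R * centred_count x i f) ^+ 4.
    rewrite -[_ ^+ 4]ger0_norm ?exprn_even_ge0 // normrX exprn_ege1 // ltW //.
    move: dev_large; rewrite emp_dist_centred_count; last by rewrite large_gt0 // -ltnS ltn_ord.
    rewrite -/L -/K normrM normrN normfV normr_nat normrM.
    by rewrite (ger0_norm (divr_ge0 K_ge0 (ler0n _ _))) mulrA mulrAC.
  rewrite /G (bigD1 i) //= (bigD1 x) //= -addrA; apply: le_trans term_ge1 _.
  rewrite lerDl addr_ge0 ?sumr_ge0 // => [y _|j _]; first exact: exprn_even_ge0.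
  by apply: sumr_ge0 => y _; exact: exprn_even_ge0.
rewrite /G iid_mean_sum; apply: ler_sum => i /large_gt0 i_gt0; rewrite iid_mean_sum.
apply: ler_sum => x _; rewrite (eq_iid_mean _ _ _ (fun f => exprMn _ _ _)) iid_meanZ.
have iN : (i <= N)%N by rewrite -ltnS.
apply: (@le_trans _ _ ((K / (i : nat)%:R) ^+ 4 * (3 * (i : nat)%:R ^+ 2))).
  by rewrite ler_wpM2l ?exprn_even_ge0 ?centred_count_moment4.
suff -> : (K / i%:R) ^+ 4 * (3 * i%:R ^+ 2) = 3 * K ^+ 4 / i%:R ^+ 2 by [].
by field; rewrite pnatr_eq0 -lt0n.
Qed.

End PrefixDeviation.

Lemma ln_pow_le_fact {R : realType} (x : R) n : 1 <= x -> ln x ^+ n.+1 <= n.+1`!%:R * x.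
Proof.
move=> x_ge1; have fact_gt0 : 0 < n.+1`!%:R :> R by rewrite ltr0n fact_gt0.
have := expR_ge1Dxn n (ln_ge0 x_ge1); rewrite lnK ?posrE ?(lt_le_trans ltr01) // => exp_ge.
by rewrite mulrC -ler_pdivrMr //; apply: le_trans _ exp_ge; rewrite lerDr.
Qed.

Lemma sum_large_inv_sqr_le {R : realType} {N} (a : R) : (1 < N)%N -> 0 <= a ->
  \sum_(i : 'I_N.+1 | N%:R / ln (N%:R : R) < (i : nat)%:R) a / (i : nat)%:R ^+ 2
  <= 2 * a * ln (N%:R : R) ^+ 2 / N%:R.
Proof.
move=> N_gt1 a_ge0; set L := ln (N%:R : R).
have L_gt0 : 0 < L by rewrite ln_gt0 // ltr1n.
have N_gt0 : 0 < N%:R :> R by rewrite ltr0n ltnW.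
have NL_gt0 : 0 < N%:R / L by rewrite divr_gt0.
have term_le i : N%:R / L < i%:R -> a / i%:R ^+ 2 <= a * (L / N%:R) ^+ 2.
  move=> i_large; have i_gt0 := lt_trans NL_gt0 i_large.
  rewrite ler_wpM2l // -exprVn -invf_div.
  apply: lerXn2r; rewrite ?nnegrE ?invr_ge0 ?(ltW i_gt0) ?(ltW NL_gt0) //.
  by rewrite lef_pV2 ?posrE // ltW.
apply: le_trans (ler_sum _ (fun i : 'I_N.+1 => term_le i)) _.
rewrite sumr_const -[_ *+ #|_|]mulr_natr.
apply: (@le_trans _ _ (a * (L / N%:R) ^+ 2 * (2 * N)%:R)).
  apply: ler_wpM2l; first by rewrite mulr_ge0 ?exprn_even_ge0.
  by rewrite ler_nat; apply: leq_trans (max_card _) _; rewrite card_ord; lia.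
suff -> : a * (L / N%:R) ^+ 2 * (2 * N)%:R = 2 * a * L ^+ 2 / N%:R by [].
by rewrite natrM; field; rewrite gt_eqF.
Qed.

Lemma ln_natr_cvgy (R : realType) : ln (N%:R : R) @[N --> \oo] --> +oo.
Proof.
apply/cvgryPgt => A; have /cvgryPgt/(_ (expR A)) := @cvgr_idn R.
apply: filterS => N expA_lt.
by rewrite -(expRK A) ltr_ln ?posrE ?expR_gt0 // (lt_trans (expR_gt0 A)).
Qed.

Lemma cvg_div_ln_natr (R : realType) (c : R) : c / ln (N%:R : R) @[N --> \oo] --> 0.
Proof.
rewrite -(mulr0 c); apply: cvgM; first exact: cvg_cst.
have ln_gt0 : \forall N \near \oo, 0 < ln (N%:R : R).
  by near=> N; rewrite ln_gt0 // ltr1n; near: N; exists 2.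
exact/(gtr0_cvgV0 ln_gt0)/ln_natr_cvgy.
Unshelve. all: end_near.
Qed.

Lemma prob_not_prefix_cond_le (R : realType) (X : finType) (P : {ffun X -> R}) N :
  is_dist P -> (1 < N)%N ->
  iid_prob P (fun c : N.-tuple X => ~~ prefix_cond P c)
  <= 6 * 7`!%:R * #|X|%:R ^+ 5 / ln (N%:R : R).
Proof.
move=> P_dist N_gt1; apply: le_trans (prob_not_prefix_cond_le_sum _ P_dist N_gt1) _.
under eq_bigr do rewrite sumr_const -[_ *+ _]mulr_natr mulrAC.
apply: le_trans (sum_large_inv_sqr_le _ N_gt1 _) _.
  by rewrite mulr_ge0 ?ler0n // mulr_ge0 // exprn_even_ge0.
set L := ln (N%:R : R); set c : R := #|X|%:R.
have L_gt0 : 0 < L by rewrite ln_gt0 // ltr1n.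
have N_gt0 : 0 < N%:R :> R by rewrite ltr0n ltnW.
have L7 : L ^+ 7 <= 7`!%:R * N%:R by apply: ln_pow_le_fact; rewrite ler1n ltnW.
rewrite (_ : _ / N%:R = 6 * c ^+ 5 / (N%:R * L) * L ^+ 7); last by field; rewrite !gt_eqF.
rewrite (_ : _ / L = 6 * c ^+ 5 / (N%:R * L) * (7`!%:R * N%:R)); last by field; rewrite !gt_eqF.
by rewrite ler_wpM2l // divr_ge0 ?mulr_ge0 ?exprn_ge0 ?ler0n // ltW ?mulr_gt0.
Qed.

Theorem lemma4 (R : realType) (X : finType) (P : {ffun X -> R}) :
  is_dist P ->
  (fun N : nat => iid_prob P (fun c : N.-tuple X => ~~ prefix_cond P c))
    @ \oo --> (0 : R).
Proof.
move=> P_dist; set C : R := 6 * 7`!%:R * #|X|%:R ^+ 5.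
apply: (@squeeze_cvgr _ _ _ _ (fun=> 0) (fun N : nat => C / ln (N%:R : R)) _ _ 0);
  [|exact: cvg_cst|exact: cvg_div_ln_natr].
near=> N; have N_gt1 : (1 < N)%N by near: N; exists 2.
rewrite iid_prob_ge0 ?prob_not_prefix_cond_le //; by case: P_dist.
Unshelve. all: end_near.
Qed.
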